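(* For a monopoly SP, the optimal revenue-maximizing and social welfare-maximizing bandwidth allocation strategies are the same and are determined by the following cases: 1. If $B_S^0\le \frac{N_f\lambda_S^{1/\alpha-1}B}{N_f\lambda_S^{1/\alpha-1}+N_m}$, the optimal bandwidth allocation remains the same as that without the regulatory constraint, namely $B_S^{\text{SW}}=B_S^{\text{rev}}=\frac{N_f\lambda_S^{1/\alpha-1}B}{N_f\lambda_S^{1/\alpha-1}+N_m}$ and $B_M^{\text{SW}}=B_M^{\text{rev}}=\frac{N_m B}{N_f\lambda_S^{1/\alpha-1}+N_m}$. 2. If $B_S^0> \frac{N_f\lambda_S^{1/\alpha-1}B}{N_f\lambda_S^{1/\alpha-1}+N_m}$, the optimal bandwidth allocation is $B_S^{\text{SW}}=B_S^{\text{rev}}=B_S^0$, $B_M^{\text{SW}}=B_M^{\text{rev}}=B-B_S^0$, and consequently there is both a welfare and a revenue loss (relative to the unconstrained case). In both cases the optimal macro- and small-cell service prices are market-clearing prices, i.e., prices that equalize total rate demand and total rate supply in both cells.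
   Context: A single service provider (SP) has total licensed bandwidth $B$, which it splits into macro-cell bandwidth $B_M$ and small-cell bandwidth $B_S$ subject to $B_M+B_S\le B$, $B_M\ge 0$, and the regulatory constraint $B_S\ge B_S^0$ (a required minimum small-cell bandwidth). Macro-cells provide total rate $C_M=B_M R_0$ and small-cells provide total rate $C_S=\lambda_S B_S R_0$, where $R_0$ is the macro-cell spectral efficiency and $\lambda_S>1$. There are mobile users of density $N_m$, who can only associate with macro-cells (and have priority there), and fixed users of density $N_f$, who can associate with either macro- or small-cells (but not both). Every user has utility $u(r)=r^{1-\alpha}/(1-\alpha)$ with $\alpha\in(0,1)$, and given a price $p$ per unit rate chooses rate $D(p)=(1/p)^{1/\alpha}$. The SP charges prices $p_M,p_S\in(0,\infty)$ per unit rate for macro- and small-cell service; users pick the cheapest service and fill its capacity (splitting proportionally to capacities under ties, with leftover demand spilling over). With $K_M,K_S$ the masses of users associated with macro- and small-cells, the SP's revenue is $p_M K_M D(p_M)+p_S K_S D(p_S)$ and social welfare is $K_M u(D(p_M))+K_S u(D(p_S))$. The SP first chooses the bandwidth split, then prices. $B_S^{\text{SW}},B_M^{\text{SW}}$ denote the welfare-maximizing allocation and $B_S^{\text{rev}},B_M^{\text{rev}}$ the revenue-maximizing allocation. *)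

From Stdlib Require Import Reals Lra.
Open Scope R_scope.

Definition demand (alpha p : R) : R := Rpower (/ p) (/ alpha).

Definition util (alpha r : R) : R := Rpower r (1 - alpha) / (1 - alpha).

Definition capM (R0 BM : R) : R := BM * R0.
Definition capS (R0 lam BS : R) : R := lam * BS * R0.

(* Users pick the cheaper service and fill its capacity; leftover demand spills
   over to the other service (fixed users only); mobile users can only use
   macro-cells and have priority there.  Under a tie, fixed users split
   proportionally to capacities, then spill over. *)
Definition assoc (Nm Nf alpha cM cS pM pS : R) : R * R :=
  let DM := demand alpha pM in
  let DS := demand alpha pS in
  if Rlt_dec pM pS then
    let m := Rmin Nm (cM / DM) in
    let f := Rmin Nf (cM / DM - m) in
    (m + f, Rmin (Nf - f) (cS / DS))
  else if Rlt_dec pS pM then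
    let s := Rmin Nf (cS / DS) in
    (Rmin (Nm + (Nf - s)) (cM / DM), s)
  else
    let th := cS / (cM + cS) in
    let a := th * Nf in
    let b := (1 - th) * Nf in
    let s1 := Rmin a (cS / DS) in
    let m := Rmin Nm (cM / DM) in
    let f1 := Rmin b (cM / DM - m) in
    let f2 := Rmin (a - s1) (cM / DM - m - f1) in
    let s2 := Rmin (b - f1) (cS / DS - s1) in
    (m + f1 + f2, s1 + s2).

Definition KM (R0 lam Nm Nf alpha BM BS pM pS : R) : R :=
  fst (assoc Nm Nf alpha (capM R0 BM) (capS R0 lam BS) pM pS).
Definition KS (R0 lam Nm Nf alpha BM BS pM pS : R) : R :=
  snd (assoc Nm Nf alpha (capM R0 BM) (capS R0 lam BS) pM pS).

Definition revenue (R0 lam Nm Nf alpha BM BS pM pS : R) : R :=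
  pM * KM R0 lam Nm Nf alpha BM BS pM pS * demand alpha pM
  + pS * KS R0 lam Nm Nf alpha BM BS pM pS * demand alpha pS.

Definition welfare (R0 lam Nm Nf alpha BM BS pM pS : R) : R :=
  KM R0 lam Nm Nf alpha BM BS pM pS * util alpha (demand alpha pM)
  + KS R0 lam Nm Nf alpha BM BS pM pS * util alpha (demand alpha pS).

Definition feasible (B BS0 BM BS : R) : Prop :=
  0 <= BM /\ BS0 <= BS /\ BM + BS <= B.

Definition market_clearing (R0 lam Nm Nf alpha BM BS pM pS : R) : Prop :=
  KM R0 lam Nm Nf alpha BM BS pM pS * demand alpha pM = capM R0 BM /\
  KS R0 lam Nm Nf alpha BM BS pM pS * demand alpha pS = capS R0 lam BS /\
  KM R0 lam Nm Nf alpha BM BS pM pS + KS R0 lam Nm Nf alpha BM BS pM pS = Nm + Nf.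

(* (bm, bs) is THE optimal allocation for objective obj (SP chooses bandwidth,
   then prices): it is feasible, together with some market-clearing prices it
   attains the maximum over all feasible allocations and positive prices, and
   every maximizer has allocation (bm, bs) and market-clearing prices. *)
Definition optimal_alloc (obj : R -> R -> R -> R -> R)
    (B BS0 R0 lam Nm Nf alpha bm bs : R) : Prop :=
  (feasible B BS0 bm bs /\
   exists pm ps, 0 < pm /\ 0 < ps /\
     market_clearing R0 lam Nm Nf alpha bm bs pm ps /\
     forall bm' bs' pm' ps', feasible B BS0 bm' bs' -> 0 < pm' -> 0 < ps' ->
       obj bm' bs' pm' ps' <= obj bm bs pm ps) /\
  (forall bm1 bs1 pm1 ps1, feasible B BS0 bm1 bs1 -> 0 < pm1 -> 0 < ps1 ->
     (forall bm' bs' pm' ps', feasible B BS0 bm' bs' -> 0 < pm' -> 0 < ps' ->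
        obj bm' bs' pm' ps' <= obj bm1 bs1 pm1 ps1) ->
     bm1 = bm /\ bs1 = bs /\ market_clearing R0 lam Nm Nf alpha bm1 bs1 pm1 ps1).

(* Strict loss w.r.t. the unconstrained problem (BS0 replaced by 0): some
   unconstrained-feasible choice beats every constrained-feasible choice. *)
Definition strict_loss (obj : R -> R -> R -> R -> R) (B BS0 : R) : Prop :=
  exists bm bs pm ps, feasible B 0 bm bs /\ 0 < pm /\ 0 < ps /\
    forall bm' bs' pm' ps', feasible B BS0 bm' bs' -> 0 < pm' -> 0 < ps' ->
      obj bm' bs' pm' ps' < obj bm bs pm ps.

From Stdlib Require Import Reals Lra.
Open Scope R_scope.

(* A user paying [p] per unit rate spends [p D(p) = D(p)^(1-α)], a concave function of the
   rate.  Fix a candidate split and let [r_M], [r_S] be the rates at which each cell serves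
   exactly its own users.  Bounding the spending in each cell by the tangent at [r_M] resp.
   [r_S] and using the capacity constraints, the revenue of any split and prices is at most
   a linear function of the bandwidths, with weights [r_M^(-α)] and [λ r_S^(-α)], plus terms
   that are largest when every user is served and the fixed users are in the small cells.
   When the two weights are equal, which happens exactly for [B_S / B_M = k / N_m], or when
   the macro weight is larger and [B_S = B_S^0], the candidate maximizes the linear part and
   attains the bound; equality in every step forces this split and market-clearing prices.
   Welfare is revenue divided by [1 - α] at all positive prices, so both objectives have the
   same maximizers. *)

Lemma Rpower_gt0 x y : 0 < Rpower x y.
Proof. apply exp_pos. Qed.

Lemma exp_convex_lt a u v : 0 < a < 1 -> u <> v ->
  exp ((1 - a) * u + a * v) < (1 - a) * exp u + a * exp v.
Proof.
  intros Ha Huv. set (m := (1 - a) * u + a * v).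
  assert (Hexp : forall w, w <> m -> exp m * (1 + (w - m)) < exp w).
  { intros w Hw. replace (exp w) with (exp m * exp (w - m)) by (rewrite <- exp_plus; f_equal; ring).
    apply Rmult_lt_compat_l; [apply exp_pos | apply exp_ineq1; lra]. }
  assert (Hu : exp m * (1 + (u - m)) < exp u).
  { apply Hexp. unfold m. intro h. apply Huv. nra. }
  assert (Hv : exp m * (1 + (v - m)) < exp v).
  { apply Hexp. unfold m. intro h. apply Huv. nra. }
  assert (Hm : (1 - a) * (exp m * (1 + (u - m))) + a * (exp m * (1 + (v - m))) = exp m)
    by (unfold m; ring).
  nra.
Qed.

Lemma Rpower_amgm_lt a x y : 0 < a < 1 -> 0 < x -> 0 < y -> x <> y ->
  Rpower x (1 - a) * Rpower y a < (1 - a) * x + a * y.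
Proof.
  intros Ha Hx Hy Hxy. unfold Rpower. rewrite <- exp_plus.
  rewrite <- (exp_ln x) at 2 by lra. rewrite <- (exp_ln y) at 2 by lra.
  apply exp_convex_lt; auto.
  intro h. apply Hxy, ln_inv; auto.
Qed.

Lemma Rpower_amgm_le a x y : 0 < a < 1 -> 0 < x -> 0 < y ->
  Rpower x (1 - a) * Rpower y a <= (1 - a) * x + a * y.
Proof.
  intros Ha Hx Hy. destruct (Req_dec x y) as [<- | Hxy].
  - rewrite <- Rpower_plus. replace (1 - a + a) with 1 by ring. rewrite Rpower_1; lra.
  - left. apply Rpower_amgm_lt; auto.
Qed.

Definition inverse_demand (a r : R) : R := Rpower r (- a).

Lemma demand_gt0 a p : 0 < demand a p.
Proof. apply Rpower_gt0. Qed.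

Lemma inverse_demand_gt0 a r : 0 < inverse_demand a r.
Proof. apply Rpower_gt0. Qed.

Lemma demand_inverse a r : 0 < a -> 0 < r -> demand a (inverse_demand a r) = r.
Proof.
  intros Ha Hr. unfold demand, inverse_demand.
  rewrite Rpower_Ropp, Rinv_inv, Rpower_mult, Rinv_r, Rpower_1; lra.
Qed.

Lemma spending_demand a p : 0 < a -> 0 < p -> p * demand a p = Rpower (demand a p) (1 - a).
Proof.
  intros Ha Hp. unfold demand.
  assert (Ep : Rpower (/ p) (Ropp 1) = p)
    by (rewrite Rpower_Ropp, Rpower_1, Rinv_inv; auto with real).
  rewrite <- Ep at 1. rewrite Rpower_mult, <- Rpower_plus. f_equal. field. lra.
Qed.

Lemma inverse_demand_mul a r : 0 < r -> inverse_demand a r * r = Rpower r (1 - a).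
Proof.
  intros Hr. unfold inverse_demand. rewrite <- (Rpower_1 r) at 2 by exact Hr.
  rewrite <- Rpower_plus. f_equal. ring.
Qed.

Lemma inverse_demand_lt a r1 r2 : 0 < a -> 0 < r1 < r2 ->
  inverse_demand a r2 < inverse_demand a r1.
Proof.
  intros Ha Hr. unfold inverse_demand. rewrite !Rpower_Ropp.
  apply Rinv_lt_contravar.
  - apply Rmult_lt_0_compat; apply Rpower_gt0.
  - apply Rlt_Rpower_l; lra.
Qed.

Lemma inverse_demand_scale a lam r : 0 < a -> 0 < lam -> 0 < r ->
  lam * inverse_demand a (Rpower lam (/ a) * r) = inverse_demand a r.
Proof.
  intros Ha Hlam Hr. unfold inverse_demand.
  rewrite <- Rpower_mult_distr, Rpower_mult by (auto; apply Rpower_gt0).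
  replace (/ a * - a) with (Ropp 1) by (field; lra).
  rewrite Rpower_Ropp, Rpower_1 by exact Hlam. field. lra.
Qed.

(* The right-hand side is the tangent at [r] of the concave map [x ↦ x^(1-a)]. *)
Lemma Rpower_le_tangent a x r : 0 < a < 1 -> 0 < x -> 0 < r ->
  Rpower x (1 - a) <= inverse_demand a r * ((1 - a) * x + a * r).
Proof.
  intros Ha Hx Hr. unfold inverse_demand.
  assert (E : Rpower x (1 - a) = Rpower r (- a) * (Rpower x (1 - a) * Rpower r a)).
  { rewrite Rmult_comm, Rmult_assoc, <- Rpower_plus, Rplus_opp_r, Rpower_O; lra. }
  rewrite E. apply Rmult_le_compat_l; [left; apply Rpower_gt0 | apply Rpower_amgm_le; auto].
Qed.

Lemma Rpower_lt_tangent a x r : 0 < a < 1 -> 0 < x -> 0 < r -> x <> r ->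
  Rpower x (1 - a) < inverse_demand a r * ((1 - a) * x + a * r).
Proof.
  intros Ha Hx Hr Hxr. unfold inverse_demand.
  assert (E : Rpower x (1 - a) = Rpower r (- a) * (Rpower x (1 - a) * Rpower r a)).
  { rewrite Rmult_comm, Rmult_assoc, <- Rpower_plus, Rplus_opp_r, Rpower_O; lra. }
  rewrite E. apply Rmult_lt_compat_l; [apply Rpower_gt0 | apply Rpower_amgm_lt; auto].
Qed.

Lemma cell_revenue_le a p r K C : 0 < a < 1 -> 0 < p -> 0 < r -> 0 <= K ->
  K * demand a p <= C ->
  p * K * demand a p <= inverse_demand a r * ((1 - a) * C + a * r * K).
Proof.
  intros Ha Hp Hr HK HC.
  replace (p * K * demand a p) with (K * Rpower (demand a p) (1 - a))
    by (rewrite <- spending_demand by lra; ring).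
  assert (Hgap : 0 <= inverse_demand a r * (1 - a) * (C - K * demand a p)).
  { apply Rmult_le_pos; [apply Rmult_le_pos; [left; apply inverse_demand_gt0 | lra] | lra]. }
  apply Rle_trans with (K * (inverse_demand a r * ((1 - a) * demand a p + a * r))); [|lra].
  apply Rmult_le_compat_l; [lra | apply Rpower_le_tangent; auto using demand_gt0].
Qed.

Lemma cell_revenue_eq a p r K C : 0 < a < 1 -> 0 < p -> 0 < r -> 0 < K ->
  K * demand a p <= C ->
  p * K * demand a p = inverse_demand a r * ((1 - a) * C + a * r * K) ->
  demand a p = r /\ K * demand a p = C.
Proof.
  intros Ha Hp Hr HK HC Heq.
  replace (p * K * demand a p) with (K * Rpower (demand a p) (1 - a)) in Heq
    by (rewrite <- spending_demand by lra; ring).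
  assert (Hpos : 0 < inverse_demand a r * (1 - a))
    by (apply Rmult_lt_0_compat; [apply inverse_demand_gt0 | lra]).
  assert (HD : demand a p = r).
  { destruct (Req_dec (demand a p) r) as [|Hne]; auto. exfalso.
    assert (K * Rpower (demand a p) (1 - a)
            < K * (inverse_demand a r * ((1 - a) * demand a p + a * r)))
      by (apply Rmult_lt_compat_l; [lra | apply Rpower_lt_tangent; auto using demand_gt0]).
    nra. }
  split; [exact HD|].
  rewrite HD, <- inverse_demand_mul in Heq by exact Hr. rewrite HD.
  assert (Hzero : inverse_demand a r * (1 - a) * (C - K * r) = 0) by lra.
  apply Rmult_integral in Hzero as [|]; lra.
Qed.

Lemma assoc_feasible Nm Nf a cM cS pM pS :
  0 <= Nm -> 0 <= Nf -> 0 <= cM -> 0 <= cS ->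
  let K := assoc Nm Nf a cM cS pM pS in
  0 <= fst K /\ 0 <= snd K /\ fst K * demand a pM <= cM /\ snd K * demand a pS <= cS /\
  snd K <= Nf /\ fst K + snd K <= Nm + Nf.
Proof.
  intros HNm HNf HcM HcS K.
  pose proof (demand_gt0 a pM) as HDM. pose proof (demand_gt0 a pS) as HDS.
  assert (Hu : 0 <= cM / demand a pM)
    by (apply Rmult_le_pos; [lra | left; apply Rinv_0_lt_compat; lra]).
  assert (Hv : 0 <= cS / demand a pS)
    by (apply Rmult_le_pos; [lra | left; apply Rinv_0_lt_compat; lra]).
  assert (Hth : 0 <= cS / (cM + cS) <= 1).
  { destruct (Req_dec (cM + cS) 0) as [h | h].
    - rewrite h, Rdiv_0_r. lra.
    - split; [apply Rmult_le_pos; [lra | left; apply Rinv_0_lt_compat; lra]|].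
      apply Rmult_le_reg_r with (cM + cS); [lra|]. field_simplify; lra. }
  assert (HuM : cM / demand a pM * demand a pM = cM) by (field; lra).
  assert (HvS : cS / demand a pS * demand a pS = cS) by (field; lra).
  cut (0 <= fst K /\ 0 <= snd K /\ fst K <= cM / demand a pM /\ snd K <= cS / demand a pS /\
       snd K <= Nf /\ fst K + snd K <= Nm + Nf).
  { intros (H1 & H2 & H3 & H4 & H5 & H6). repeat split; auto.
    - rewrite <- HuM. apply Rmult_le_compat_r; lra.
    - rewrite <- HvS. apply Rmult_le_compat_r; lra. }
  clear HuM HvS. unfold K, assoc. cbv zeta.
  generalize dependent (cM / demand a pM). generalize dependent (cS / demand a pS).
  generalize dependent (cS / (cM + cS)).
  intros th Hth v Hv u Hu.
  destruct (Rlt_dec pM pS); [|destruct (Rlt_dec pS pM)]; simpl; unfold Rmin;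
    repeat match goal with |- context [Rle_dec ?x ?y] => destruct (Rle_dec x y) end;
    nra.
Qed.

Lemma assoc_exact_capacity Nm Nf a cM cS pM pS :
  pS < pM -> cM / demand a pM = Nm -> cS / demand a pS = Nf ->
  assoc Nm Nf a cM cS pM pS = (Nm, Nf).
Proof.
  intros Hp HM HS. unfold assoc. cbv zeta.
  destruct (Rlt_dec pM pS); [lra|]. destruct (Rlt_dec pS pM); [|lra].
  rewrite HM, HS, (Rmin_left Nf Nf) by lra. replace (Nm + (Nf - Nf)) with Nm by ring.
  rewrite Rmin_left by lra. reflexivity.
Qed.

Lemma welfare_eq_revenue R0 lam Nm Nf a x y p q : 0 < a < 1 -> 0 < p -> 0 < q ->
  welfare R0 lam Nm Nf a x y p q = revenue R0 lam Nm Nf a x y p q / (1 - a).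
Proof.
  intros Ha Hp Hq. unfold welfare, revenue, util.
  rewrite <- !spending_demand by lra. field. lra.
Qed.

Lemma optimal_alloc_scale (obj obj' : R -> R -> R -> R -> R) c B BS0 R0 lam Nm Nf a bm bs :
  0 < c -> (forall x y p q, 0 < p -> 0 < q -> obj' x y p q = obj x y p q / c) ->
  optimal_alloc obj B BS0 R0 lam Nm Nf a bm bs -> optimal_alloc obj' B BS0 R0 lam Nm Nf a bm bs.
Proof.
  intros Hc Hobj [[Hf [pm [ps (Hpm & Hps & Hmc & Hmax)]]] Huniq].
  assert (Hdiv : forall u v, u <= v <-> u / c <= v / c).
  { intros u v. unfold Rdiv. split; intro h.
    - apply Rmult_le_compat_r; [left; apply Rinv_0_lt_compat|]; auto.
    - apply Rmult_le_reg_r with (/ c); [apply Rinv_0_lt_compat|]; auto. }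
  split.
  - split; [exact Hf|]. exists pm, ps. do 3 (split; [assumption|]).
    intros. rewrite !Hobj by auto. apply -> Hdiv. apply Hmax; auto.
  - intros bm1 bs1 pm1 ps1 Hf1 Hpm1 Hps1 Hmax1. apply Huniq; auto.
    intros. apply <- Hdiv. rewrite <- !Hobj by auto. apply Hmax1; auto.
Qed.

(* A constrained-feasible choice is unconstrained-feasible with small-cell bandwidth
   [<> bs], so it is not an unconstrained maximizer. *)
Lemma strict_loss_of_optimal obj B BS0 R0 lam Nm Nf a bm bs : 0 <= BS0 -> bs < BS0 ->
  optimal_alloc obj B 0 R0 lam Nm Nf a bm bs -> strict_loss obj B BS0.
Proof.
  intros HBS0 Hbs [[Hf [pm [ps (Hpm & Hps & _ & Hmax)]]] Huniq].
  exists bm, bs, pm, ps. do 3 (split; [assumption|]).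
  intros x y p q Hxy Hp Hq.
  assert (Hxy0 : feasible B 0 x y) by (unfold feasible in *; lra).
  destruct (Rlt_or_le (obj x y p q) (obj bm bs pm ps)) as [|Hge]; auto.
  exfalso. destruct (Huniq x y p q Hxy0 Hp Hq) as [_ [Hy _]].
  - intros. apply Rle_trans with (obj bm bs pm ps); auto.
  - unfold feasible in Hxy. lra.
Qed.

Section MarketClearingOptimum.

Variables (B BS0 R0 lam Nm Nf a bm bs rM rS : R).
Hypotheses (Ha : 0 < a < 1) (HR0 : 0 < R0) (Hlam : 1 < lam) (HNm : 0 < Nm) (HNf : 0 < Nf)
  (HBS0 : 0 <= BS0) (Hbm : 0 < bm) (Hbs : BS0 <= bs) (HB : bm + bs = B)
  (HrM : rM * Nm = capM R0 bm) (HrS : rS * Nf = capS R0 lam bs)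
  (Hrates : Rpower lam (/ a) * rM <= rS)
  (Hslack : Rpower lam (/ a) * rM = rS \/ bs = BS0).

Local Notation pM := (inverse_demand a rM).
Local Notation pS := (inverse_demand a rS).
Local Notation kM x y p q := (KM R0 lam Nm Nf a x y p q).
Local Notation kS x y p q := (KS R0 lam Nm Nf a x y p q).
Local Notation V := (R0 * (pM * bm + lam * pS * bs)).
Local Notation tangent_bound x y k1 k2 :=
  (pM * ((1 - a) * capM R0 x + a * rM * k1) + pS * ((1 - a) * capS R0 lam y + a * rS * k2)).

Lemma rM_gt0 : 0 < rM.
Proof. unfold capM in HrM. apply Rmult_lt_reg_r with Nm; nra. Qed.

Lemma rS_gt0 : 0 < rS.
Proof.
  pose proof rM_gt0.
  assert (0 < Rpower lam (/ a) * rM) by (apply Rmult_lt_0_compat; auto using Rpower_gt0).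
  lra.
Qed.

(* [Hrates] and [Hslack] are the optimality conditions in disguise: a unit of bandwidth earns
   [pM] in macro-cells and [lam * pS] in small cells. *)
Lemma marginal_revenue_le : lam * pS <= pM.
Proof.
  pose proof rM_gt0. rewrite <- (inverse_demand_scale a lam rM) by lra.
  apply Rmult_le_compat_l; [lra|].
  destruct (Req_dec (Rpower lam (/ a) * rM) rS) as [<- | Hne]; [lra|].
  left. apply inverse_demand_lt; [lra|].
  split; [apply Rmult_lt_0_compat; auto using Rpower_gt0 | lra].
Qed.

Lemma marginal_revenue_slack : lam * pS = pM \/ bs = BS0.
Proof.
  destruct Hslack as [<- | Heq]; [left | right; exact Heq].
  apply inverse_demand_scale; [lra | lra | exact rM_gt0].
Qed.

Lemma spending_rate_lt : pM * rM < pS * rS.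
Proof.
  pose proof rM_gt0. pose proof rS_gt0.
  assert (Hg : 1 < Rpower lam (/ a)).
  { rewrite <- (Rpower_O lam) by lra. apply Rpower_lt; [lra|]. apply Rinv_0_lt_compat; lra. }
  rewrite !inverse_demand_mul by assumption.
  apply Rlt_Rpower_l; [lra|]. split; [assumption|nra].
Qed.

Lemma bandwidth_value_le x y : feasible B BS0 x y ->
  pM * x + lam * pS * y <= pM * bm + lam * pS * bs.
Proof.
  intros (Hx & Hy & Hxy). pose proof marginal_revenue_le.
  assert (Hfill : 0 <= pM * (bm + bs - x - y))
    by (apply Rmult_le_pos; [left; apply inverse_demand_gt0 | lra]).
  destruct marginal_revenue_slack as [E | E].
  - rewrite E. lra.
  - assert (0 <= (pM - lam * pS) * (y - bs)) by (apply Rmult_le_pos; lra). lra.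
Qed.

(* Three nonnegative gaps: misallocated bandwidth, unserved users, and fixed users kept out
   of the small cells, where a user spends more ([spending_rate_lt]). *)
Lemma value_gap x y k1 k2 :
  V - tangent_bound x y k1 k2 =
  (1 - a) * R0 * (pM * bm + lam * pS * bs - (pM * x + lam * pS * y))
  + a * (pM * rM * (Nm + Nf - k1 - k2) + (pS * rS - pM * rM) * (Nf - k2)).
Proof.
  unfold capM, capS in *.
  replace (pM * rM * (Nm + Nf - k1 - k2)) with (pM * (rM * Nm) + pM * rM * (Nf - k1 - k2)) by ring.
  replace ((pS * rS - pM * rM) * (Nf - k2))
    with (pS * (rS * Nf) - pS * rS * k2 - pM * rM * (Nf - k2)) by ring.
  rewrite HrM, HrS. ring.
Qed.

Lemma tangent_bound_le x y k1 k2 : feasible B BS0 x y -> k2 <= Nf -> k1 + k2 <= Nm + Nf ->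
  tangent_bound x y k1 k2 <= V /\ (V <= tangent_bound x y k1 k2 -> k1 = Nm /\ k2 = Nf).
Proof.
  intros Hf Hk2 Hk. pose proof (value_gap x y k1 k2). pose proof (bandwidth_value_le x y Hf).
  pose proof rM_gt0. pose proof spending_rate_lt. pose proof (inverse_demand_gt0 a rM).
  assert (0 <= (1 - a) * R0 * (pM * bm + lam * pS * bs - (pM * x + lam * pS * y)))
    by (apply Rmult_le_pos; [apply Rmult_le_pos|]; lra).
  assert (Hunserved : 0 <= pM * rM * (Nm + Nf - k1 - k2))
    by (apply Rmult_le_pos; [apply Rmult_le_pos|]; lra).
  assert (Hmacro : 0 <= (pS * rS - pM * rM) * (Nf - k2)) by (apply Rmult_le_pos; lra).
  split; [nra|]. intros HV.
  assert (Hzero : pM * rM * (Nm + Nf - k1 - k2) + (pS * rS - pM * rM) * (Nf - k2) = 0) by nra.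
  assert (Hmacro0 : (pS * rS - pM * rM) * (Nf - k2) = 0) by lra.
  assert (Hunserved0 : pM * rM * (Nm + Nf - k1 - k2) = 0) by lra.
  apply Rmult_integral in Hmacro0 as [|]; [lra|].
  apply Rmult_integral in Hunserved0 as [|]; [nra|]. lra.
Qed.

Lemma association_bounds x y p q : feasible B BS0 x y ->
  0 <= kM x y p q /\ 0 <= kS x y p q /\
  kM x y p q * demand a p <= capM R0 x /\ kS x y p q * demand a q <= capS R0 lam y /\
  kS x y p q <= Nf /\ kM x y p q + kS x y p q <= Nm + Nf.
Proof.
  intros (Hx & Hy & _). apply assoc_feasible; unfold capM, capS; try lra.
  - nra.
  - apply Rmult_le_pos; [nra | lra].
Qed.

Lemma revenue_le_value x y p q : feasible B BS0 x y -> 0 < p -> 0 < q ->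
  revenue R0 lam Nm Nf a x y p q <= V.
Proof.
  intros Hf Hp Hq.
  destruct (association_bounds x y p q Hf) as (Hk1 & Hk2 & HcM & HcS & Hk2N & Hk).
  pose proof (cell_revenue_le a p rM _ _ Ha Hp rM_gt0 Hk1 HcM).
  pose proof (cell_revenue_le a q rS _ _ Ha Hq rS_gt0 Hk2 HcS).
  pose proof (proj1 (tangent_bound_le x y _ _ Hf Hk2N Hk)).
  unfold revenue. lra.
Qed.

Lemma revenue_eq_value x y p q : feasible B BS0 x y -> 0 < p -> 0 < q ->
  V <= revenue R0 lam Nm Nf a x y p q ->
  x = bm /\ y = bs /\ market_clearing R0 lam Nm Nf a x y p q.
Proof.
  intros Hf Hp Hq HV.
  destruct (association_bounds x y p q Hf) as (Hk1 & Hk2 & HcM & HcS & Hk2N & Hk).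
  pose proof (cell_revenue_le a p rM _ _ Ha Hp rM_gt0 Hk1 HcM).
  pose proof (cell_revenue_le a q rS _ _ Ha Hq rS_gt0 Hk2 HcS).
  destruct (tangent_bound_le x y _ _ Hf Hk2N Hk) as [Hle Heq].
  unfold revenue in HV.
  destruct (Heq ltac:(lra)) as [E1 E2].
  rewrite E1 in *. rewrite E2 in *.
  destruct (cell_revenue_eq a p rM _ _ Ha Hp rM_gt0 HNm HcM ltac:(lra)) as [DM CM].
  destruct (cell_revenue_eq a q rS _ _ Ha Hq rS_gt0 HNf HcS ltac:(lra)) as [DS CS].
  unfold capM, capS in *. rewrite DM in CM. rewrite DS in CS.
  assert (Hx : x = bm) by (apply Rmult_eq_reg_r with R0; lra).
  assert (Hy : y = bs) by (apply Rmult_eq_reg_r with (lam * R0); nra).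
  unfold market_clearing, capM, capS. rewrite E1, E2, DM, DS. lra.
Qed.

Lemma candidate_association :
  assoc Nm Nf a (capM R0 bm) (capS R0 lam bs) pM pS = (Nm, Nf).
Proof.
  pose proof rM_gt0. pose proof rS_gt0.
  apply assoc_exact_capacity.
  - apply Rmult_lt_reg_l with lam; [lra|]. pose proof marginal_revenue_le.
    pose proof (inverse_demand_gt0 a rM). nra.
  - rewrite demand_inverse, <- HrM by lra. field. lra.
  - rewrite demand_inverse, <- HrS by lra. field. lra.
Qed.

Lemma candidate_clearing : market_clearing R0 lam Nm Nf a bm bs pM pS.
Proof.
  pose proof rM_gt0. pose proof rS_gt0.
  unfold market_clearing, KM, KS. rewrite candidate_association. simpl.
  rewrite !demand_inverse by lra. lra.
Qed.

Lemma candidate_revenue : revenue R0 lam Nm Nf a bm bs pM pS = V.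
Proof.
  pose proof rM_gt0. pose proof rS_gt0.
  unfold revenue, KM, KS. rewrite candidate_association. simpl.
  rewrite !demand_inverse by lra.
  replace (pM * Nm * rM) with (pM * (rM * Nm)) by ring.
  replace (pS * Nf * rS) with (pS * (rS * Nf)) by ring.
  rewrite HrM, HrS. unfold capM, capS. ring.
Qed.

Lemma revenue_optimal_alloc : optimal_alloc (revenue R0 lam Nm Nf a) B BS0 R0 lam Nm Nf a bm bs.
Proof.
  assert (Hf : feasible B BS0 bm bs) by (unfold feasible; lra).
  split.
  - split; [exact Hf|]. exists pM, pS.
    split; [apply inverse_demand_gt0|]. split; [apply inverse_demand_gt0|].
    split; [exact candidate_clearing|].
    intros. rewrite candidate_revenue. apply revenue_le_value; assumption.
  - intros x y p q Hxy Hp Hq Hmax. apply revenue_eq_value; auto.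
    rewrite <- candidate_revenue. apply Hmax; auto using inverse_demand_gt0.
Qed.

End MarketClearingOptimum.

Section OptimalSplits.

Variables (B BS0 R0 lam Nm Nf a k : R).
Hypotheses (Ha : 0 < a < 1) (HR0 : 0 < R0) (Hlam : 1 < lam) (HNm : 0 < Nm) (HNf : 0 < Nf)
  (HB : 0 < B) (Hk : k = Nf * Rpower lam (/ a - 1)).

Lemma lam_mul_k : lam * k = Nf * Rpower lam (/ a).
Proof.
  rewrite Hk. replace (/ a) with (1 + (/ a - 1)) at 2 by ring.
  rewrite Rpower_plus, Rpower_1 by lra. ring.
Qed.

Lemma k_gt0 : 0 < k.
Proof. rewrite Hk. apply Rmult_lt_0_compat; [exact HNf | apply Rpower_gt0]. Qed.

Lemma unconstrained_small_bandwidth_ge0 : 0 <= k * B / (k + Nm).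
Proof.
  pose proof k_gt0. left. apply Rdiv_lt_0_compat; nra.
Qed.

Lemma unconstrained_optimal B0 : 0 <= B0 -> B0 <= k * B / (k + Nm) ->
  optimal_alloc (revenue R0 lam Nm Nf a) B B0 R0 lam Nm Nf a (Nm * B / (k + Nm)) (k * B / (k + Nm)).
Proof.
  intros HB0 HB0u. pose proof k_gt0.
  apply revenue_optimal_alloc with (rM := R0 * B / (k + Nm))
    (rS := Rpower lam (/ a) * (R0 * B / (k + Nm))); auto; unfold capM, capS.
  - apply Rdiv_lt_0_compat; nra.
  - field. lra.
  - field. lra.
  - replace (lam * (k * B / (k + Nm)) * R0) with (lam * k * (R0 * B / (k + Nm))) by (field; lra).
    rewrite lam_mul_k. ring.
  - apply Rle_refl.
Qed.

Lemma constrained_optimal : k * B / (k + Nm) < BS0 -> BS0 < B ->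
  optimal_alloc (revenue R0 lam Nm Nf a) B BS0 R0 lam Nm Nf a (B - BS0) BS0.
Proof.
  intros Hlow Hup. pose proof k_gt0.
  assert (HBS0 : 0 < BS0) by (pose proof unconstrained_small_bandwidth_ge0; lra).
  assert (Hcross : k * (B - BS0) < Nm * BS0).
  { apply Rmult_lt_compat_r with (r := k + Nm) in Hlow; [|lra].
    replace (k * B / (k + Nm) * (k + Nm)) with (k * B) in Hlow by (field; lra). lra. }
  apply revenue_optimal_alloc with (rM := R0 * (B - BS0) / Nm) (rS := lam * R0 * BS0 / Nf);
    auto; unfold capM, capS; try lra.
  - field. lra.
  - field. lra.
  - replace (Rpower lam (/ a)) with (lam * k / Nf) by (rewrite lam_mul_k; field; lra).
    replace (lam * k / Nf * (R0 * (B - BS0) / Nm)) with (lam * R0 / (Nf * Nm) * (k * (B - BS0)))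
      by (field; lra).
    replace (lam * R0 * BS0 / Nf) with (lam * R0 / (Nf * Nm) * (Nm * BS0)) by (field; lra).
    apply Rmult_le_compat_l; [|lra].
    left. apply Rdiv_lt_0_compat; nra.
Qed.

End OptimalSplits.

Theorem theorem1 (B BS0 R0 lam Nm Nf alpha : R)
  (Halpha0 : 0 < alpha) (Halpha1 : alpha < 1) (Hlam : 1 < lam)
  (HR0 : 0 < R0) (HNm : 0 < Nm) (HNf : 0 < Nf)
  (HBS0 : 0 <= BS0) (HBS0B : BS0 < B) :
  let k := Nf * Rpower lam (/ alpha - 1) in
  let BSu := k * B / (k + Nm) in
  let BMu := Nm * B / (k + Nm) in
  let rev := revenue R0 lam Nm Nf alpha in
  let sw := welfare R0 lam Nm Nf alpha in
  (BS0 <= BSu ->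
     optimal_alloc rev B BS0 R0 lam Nm Nf alpha BMu BSu /\
     optimal_alloc sw B BS0 R0 lam Nm Nf alpha BMu BSu) /\
  (BSu < BS0 ->
     optimal_alloc rev B BS0 R0 lam Nm Nf alpha (B - BS0) BS0 /\
     optimal_alloc sw B BS0 R0 lam Nm Nf alpha (B - BS0) BS0 /\
     strict_loss sw B BS0 /\ strict_loss rev B BS0).
Proof.
  intros k BSu BMu rev sw.
  assert (Ha : 0 < alpha < 1) by lra.
  assert (HB : 0 < B) by lra.
  assert (HBSu : 0 <= BSu)
    by exact (unconstrained_small_bandwidth_ge0 B lam Nm Nf alpha k HNm HNf HB eq_refl).
  assert (Hunc : forall B0, 0 <= B0 -> B0 <= BSu ->
                            optimal_alloc rev B B0 R0 lam Nm Nf alpha BMu BSu)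
    by (intros; apply unconstrained_optimal with (k := k); auto).
  assert (Hsw : forall B0 bm bs, optimal_alloc rev B B0 R0 lam Nm Nf alpha bm bs ->
                                 optimal_alloc sw B B0 R0 lam Nm Nf alpha bm bs).
  { intros B0 bm bs. apply optimal_alloc_scale with (c := 1 - alpha); [lra|].
    intros. apply welfare_eq_revenue; auto. }
  split.
  - intros Hlow. assert (Hrev := Hunc BS0 HBS0 Hlow).
    split; [exact Hrev | exact (Hsw _ _ _ Hrev)].
  - intros Hhigh.
    assert (Hcon : optimal_alloc rev B BS0 R0 lam Nm Nf alpha (B - BS0) BS0)
      by (apply constrained_optimal with (k := k); auto).
    assert (Hunc0 := Hunc 0 (Rle_refl 0) HBSu).
    split; [exact Hcon|]. split; [exact (Hsw _ _ _ Hcon)|].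
    split; eapply strict_loss_of_optimal with (bm := BMu) (bs := BSu); eauto.
Qed.
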